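(* Let $G$ be a finite group and $f \ge 0$. Call an irreducible representation $\lambda$ of $G$ $f$-smooth if $\sum_{g \in G} \left|\chi_\lambda(g)/d_\lambda\right|^4 \le f$. Let $\lambda,\mu,\lambda',\mu'$ be irreducible representations of $G$, and suppose $\lambda$ and $\mu$ are $f$-smooth. Then \[ P_{\rm coll}^{\lambda\otimes\mu,\lambda'\otimes\mu'} \le \frac{\max_\tau d_\tau}{\sqrt{|G|}}\sqrt{f}, \] where the maximum is over irreducible representations $\tau$ of $G$.
   Context: For irreps $\lambda,\mu,\tau$ of a finite group $G$, with characters $\chi$ and dimensions $d$, the natural distribution on irreps in $\lambda\otimes\mu$ is $P^{\lambda\otimes\mu}_\tau = \frac{d_\tau}{d_\lambda d_\mu}\langle \chi_\tau, \chi_\lambda\chi_\mu\rangle_G$, where $\langle \phi,\psi\rangle_G = \frac{1}{|G|}\sum_{g\in G}\phi(g)\psi(g)^*$. The collision probability is $P_{\rm coll}^{\lambda\otimes\mu,\lambda'\otimes\mu'} = \sum_\tau P^{\lambda\otimes\mu}_\tau P^{\lambda'\otimes\mu'}_\tau$, summing over all irreps $\tau$ of $G$. *)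

From mathcomp Require Import all_boot all_order all_algebra all_fingroup all_solvable all_field all_character.
Set Implicit Arguments. Unset Strict Implicit. Unset Printing Implicit Defensive.
Import Order.TTheory GRing.Theory Num.Theory.
Local Open Scope ring_scope.

Definition irr_dim (gT : finGroupType) (G : {group gT}) (i : Iirr G) : algC :=
  'chi[G]_i 1%g.

Definition Ptensor (gT : finGroupType) (G : {group gT}) (lam mu tau : Iirr G) : algC :=
  irr_dim tau / (irr_dim lam * irr_dim mu) * '['chi[G]_tau, 'chi[G]_lam * 'chi[G]_mu].

Definition Pcoll (gT : finGroupType) (G : {group gT}) (lam mu lam' mu' : Iirr G) : algC :=
  \sum_(tau : Iirr G) Ptensor lam mu tau * Ptensor lam' mu' tau.

Definition smooth (gT : finGroupType) (G : {group gT}) (f : algC) (lam : Iirr G) : bool :=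
  \sum_(g in G) `|'chi[G]_lam g / irr_dim lam| ^+ 4 <= f.

Definition max_dim (gT : finGroupType) (G : {group gT}) : algC :=
  \big[Num.max/0]_(tau : Iirr G) irr_dim tau.

From mathcomp Require Import all_boot all_order all_algebra all_fingroup all_solvable all_field all_character.
From mathcomp Require Import ring.
Set Implicit Arguments. Unset Strict Implicit. Unset Printing Implicit Defensive.
Import Order.TTheory GRing.Theory Num.Theory.
Local Open Scope ring_scope.

(** By Cauchy-Schwarz and the orthonormality of irreducible characters,
    [<chi_tau, chi_lam chi_mu>] is at most the norm of [chi_lam chi_mu], and
    that norm is controlled by the fourth moments of the normalised characters
    through [|a|^2 |b|^2 <= (|a|^4 + |b|^4) / 2].  Hence every weight of the
    distribution [P^{lam (x) mu}] is at most [d_tau sqrt f / sqrt |G|], and the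
    collision probability, an average of these weights against the
    probability distribution [P^{lam' (x) mu'}], obeys the same bound. *)

Lemma real_le_bigmax (R : numDomainType) (I : finType) (x0 : R) (F : I -> R) (j : I) :
  x0 \is Num.real -> (forall i, F i \is Num.real) ->
  F j <= \big[Num.max/x0]_i F i.
Proof.
move=> x0_real F_real; have : j \in index_enum I by rewrite mem_index_enum.
elim: (index_enum I) => // i r IHr; rewrite inE big_cons.
rewrite comparable_le_max ?real_comparable ?bigmax_real //.
by case/orP=> [/eqP-> | /IHr->]; rewrite ?lexx ?orbT.
Qed.

Lemma sqr_normM_le_mean_exp4 (R : numFieldType) (a b : R) :
  `|a * b| ^+ 2 <= (`|a| ^+ 4 + `|b| ^+ 4) / 2.
Proof.
have -> : `|a| ^+ 4 = (`|a| ^+ 2) ^+ 2 by rewrite -exprM.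
have -> : `|b| ^+ 4 = (`|b| ^+ 2) ^+ 2 by rewrite -exprM.
by rewrite normrM exprMn; apply/leif_le/real_leif_mean_square; rewrite realX.
Qed.

Section TensorDistribution.

Variables (gT : finGroupType) (G : {group gT}).
Implicit Types (lam mu tau : Iirr G) (f : algC).

Lemma irr_dim_gt0 tau : 0 < irr_dim tau.
Proof. exact: irr1_gt0. Qed.

Lemma irr_dim_ge0 tau : 0 <= irr_dim tau.
Proof. exact: ltW (irr_dim_gt0 tau). Qed.

Lemma irr_dim_le_max_dim tau : irr_dim tau <= max_dim G.
Proof.
by apply: real_le_bigmax => // i; rewrite ger0_real ?irr_dim_ge0.
Qed.

Lemma cfdot_irr_le_sqrt_cfnorm tau (phi : 'CF(G)) :
  phi \is a character -> '['chi_tau, phi] <= sqrtC '[phi].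
Proof.
move=> Nphi; have dot_ge0 : 0 <= '['chi_tau, phi].
  by rewrite natr_ge0 ?Cnat_cfdot_char ?irr_char.
have [+ _] := cfCauchySchwarz_sqrt 'chi_tau phi.
by rewrite ger0_norm // cfnorm_irr sqrtC1 mul1r.
Qed.

Lemma cfnorm_irr_mul_le f lam mu : smooth f lam -> smooth f mu ->
  '['chi_lam * 'chi_mu] <= (irr_dim lam * irr_dim mu) ^+ 2 * f / #|G|%:R.
Proof.
rewrite /smooth => smooth_lam smooth_mu.
set dl := irr_dim lam; set dm := irr_dim mu.
have dl_gt0 := irr_dim_gt0 lam; have dm_gt0 := irr_dim_gt0 mu.
have d_gt0 : 0 < dl * dm by rewrite mulr_gt0.
rewrite (cfnormE (cfun_onG _)) mulrC ler_wpM2r ?invr_ge0 ?ler0n //.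
have pointwise g : `|('chi_lam * 'chi_mu) g| ^+ 2 <=
    (dl * dm) ^+ 2 * ((`|'chi_lam g / dl| ^+ 4 + `|'chi_mu g / dm| ^+ 4) / 2).
  have -> : ('chi_lam * 'chi_mu) g = (dl * dm) * ('chi_lam g / dl * ('chi_mu g / dm)).
    by rewrite cfunE; field; rewrite !gt_eqF.
  by rewrite normrM exprMn gtr0_norm // ler_pM2l ?exprn_gt0 ?sqr_normM_le_mean_exp4.
rewrite (le_trans (ler_sum _ (fun g _ => pointwise g))) // -mulr_sumr.
rewrite ler_pM2l ?exprn_gt0 // -mulr_suml big_split /=.
by rewrite ler_pdivrMr ?ltr0n // mulr_natr mulr2n lerD.
Qed.

Lemma Ptensor_ge0 lam mu tau : 0 <= Ptensor lam mu tau.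
Proof.
apply: mulr_ge0; first by rewrite divr_ge0 ?mulr_ge0 ?irr_dim_ge0.
by rewrite natr_ge0 ?Cnat_cfdot_char ?rpredM ?irr_char.
Qed.

Lemma sum_Ptensor lam mu : \sum_tau Ptensor lam mu tau = 1.
Proof.
set psi := 'chi_lam * 'chi_mu.
have Npsi : psi \is a character by rewrite rpredM ?irr_char.
have psi1 : \sum_tau irr_dim tau * '['chi_tau, psi] = irr_dim lam * irr_dim mu.
  have := congr1 (fun phi : 'CF(G) => phi 1%g) (cfun_sum_cfdot psi).
  rewrite /= sum_cfunE cfunE => ->; apply: eq_bigr => tau _.
  by rewrite cfunE mulrC cfdotC_char ?irr_char.
under eq_bigr => tau _ do rewrite /Ptensor mulrAC.
by rewrite -mulr_suml psi1 divff // mulf_neq0 // gt_eqF ?irr_dim_gt0.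
Qed.

Lemma Ptensor_le f lam mu tau : 0 <= f -> smooth f lam -> smooth f mu ->
  Ptensor lam mu tau <= irr_dim tau / sqrtC #|G|%:R * sqrtC f.
Proof.
move=> f_ge0 smooth_lam smooth_mu.
set d := irr_dim lam * irr_dim mu; pose sG : algC := sqrtC #|G|%:R.
have d_gt0 : 0 < d by rewrite mulr_gt0 ?irr_dim_gt0.
have sG_gt0 : 0 < sG by rewrite sqrtC_gt0 ltr0n cardG_gt0.
have bound_ge0 : 0 <= d * sqrtC f / sG.
  by rewrite divr_ge0 ?mulr_ge0 ?sqrtC_ge0 ?irr_dim_ge0 ?ler0n.
have norm_le : sqrtC '['chi_lam * 'chi_mu] <= d * sqrtC f / sG.
  rewrite -[X in _ <= X](sqrCK bound_ge0) ler_sqrtC ?qualifE /= ?cfnorm_ge0 ?exprn_ge0 //.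
  by rewrite expr_div_n exprMn !sqrtCK cfnorm_irr_mul_le.
have ratio_ge0 : 0 <= irr_dim tau / d by rewrite divr_ge0 ?irr_dim_ge0 ?(ltW d_gt0).
have dot_le : '['chi_tau, 'chi_lam * 'chi_mu] <= d * sqrtC f / sG.
  by rewrite (le_trans _ norm_le) ?cfdot_irr_le_sqrt_cfnorm ?rpredM ?irr_char.
have -> : irr_dim tau / sG * sqrtC f = irr_dim tau / d * (d * sqrtC f / sG).
  by field; rewrite !gt_eqF.
exact: le_trans (ler_wpM2l ratio_ge0 dot_le).
Qed.

End TensorDistribution.

Theorem lemma1 (gT : finGroupType) (G : {group gT}) (f : algC) (hf : 0 <= f)
  (lam mu lam' mu' : Iirr G) (hlam : smooth f lam) (hmu : smooth f mu) :
  Pcoll lam mu lam' mu' <= max_dim G / sqrtC (#|G|%:R) * sqrtC f.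
Proof.
have P_le tau : Ptensor lam mu tau <= max_dim G / sqrtC #|G|%:R * sqrtC f.
  apply: le_trans (Ptensor_le tau hf hlam hmu) _.
  apply: ler_wpM2r; first by rewrite sqrtC_ge0.
  apply: ler_wpM2r; first by rewrite invr_ge0 sqrtC_ge0 ler0n.
  exact: irr_dim_le_max_dim.
apply: le_trans (ler_sum _ (fun tau _ => ler_wpM2r (Ptensor_ge0 lam' mu' tau) (P_le tau))) _.
by rewrite -mulr_sumr sum_Ptensor mulr1.
Qed.
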